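(* Let $G$ be a Schur positive tripartite graph. If all stable tripartitions of $G$ have the same type, then every stable tripartition of $G$ is balanced, i.e., its three block sizes pairwise differ by at most $1$.
   Context: For a finite simple graph $G$, the chromatic symmetric function is $X_G=\sum_{\kappa}\prod_{v\in V(G)}x_{\kappa(v)}$ over proper colorings $\kappa:V(G)\to\{1,2,\dots\}$; $G$ is Schur positive if all coefficients of $X_G$ in the Schur basis are nonnegative. A stable tripartition of $G$ is a set partition of $V(G)$ into three stable (independent) sets; its type is the integer partition formed by the three block sizes. A tripartite graph is a graph admitting a stable tripartition. *)

From HB Require Import structures.
From mathcomp Require Import all_boot all_order all_algebra.
From mathcomp Require Import mpoly.
Set Implicit Arguments. Unset Strict Implicit. Unset Printing Implicit Defensive.
Import Order.TTheory GRing.Theory Num.Theory.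

Definition simple_graph (T : finType) (e : rel T) : Prop :=
  ssrbool.symmetric e /\ ssrbool.irreflexive e.

Notation nv T := #|T|.

(* Proper colorings with colors in {0,..,|V|-1} (enough variables). *)
Definition proper_coloring (T : finType) (e : rel T) (k : {ffun T -> 'I_(nv T)}) :=
  [forall u, forall v, e u v ==> (k u != k v)].

Definition chrom_sym (T : finType) (e : rel T) : {mpoly rat[nv T]} :=
  (\sum_(k : {ffun T -> 'I_(nv T)} | proper_coloring e k)
      \prod_(v : T) 'X_(k v))%R.

(* Integer partitions of n, with at most n parts, encoded as a function
   i |-> lambda_i (parts listed by index, zero-padded). *)
Definition is_partition (n : nat) (la : {ffun 'I_n -> 'I_n.+1}) : bool :=
  [forall i : 'I_n, forall j : 'I_n, (i <= j) ==> (la j <= la i)] &&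
  (\sum_(i < n) (la i : nat) == n).

Definition in_shape (n : nat) (la : {ffun 'I_n -> 'I_n.+1}) (c : 'I_n * 'I_n) : bool :=
  c.2 < la c.1.

(* Semistandard Young tableaux of shape la with entries in 'I_n;
   entries outside the diagram are normalized to 0. *)
Definition is_ssyt (n : nat) (la : {ffun 'I_n -> 'I_n.+1})
    (t : {ffun 'I_n * 'I_n -> 'I_n}) : bool :=
  [forall c, ~~ in_shape la c ==> (val (t c) == 0%N)] &&
  [forall i : 'I_n, forall j : 'I_n, forall j' : 'I_n,
     [&& in_shape la (i, j), in_shape la (i, j') & j < j'] ==>
       (t (i, j) <= t (i, j'))] &&
  [forall i : 'I_n, forall i' : 'I_n, forall j : 'I_n,
     [&& in_shape la (i, j), in_shape la (i', j) & i < i'] ==>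
       (t (i, j) < t (i', j))].

Definition schur (n : nat) (la : {ffun 'I_n -> 'I_n.+1}) : {mpoly rat[n]} :=
  (\sum_(t : {ffun 'I_n * 'I_n -> 'I_n} | is_ssyt la t)
      \prod_(c : 'I_n * 'I_n | in_shape la c) 'X_(t c))%R.

Definition schur_positive (T : finType) (e : rel T) : Prop :=
  exists c : {ffun 'I_(nv T) -> 'I_(nv T).+1} -> rat,
    (forall la, (0 <= c la)%R) /\
    chrom_sym e = (\sum_(la | is_partition la) c la *: schur la)%R.

Definition stable (T : finType) (e : rel T) (A : {set T}) : bool :=
  [forall u in A, forall v in A, ~~ e u v].

(* Stable tripartition: set partition of V (nonempty blocks) into three
   stable blocks. *)
Definition stable_tripartition (T : finType) (e : rel T) (P : {set {set T}}) : Prop :=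
  [/\ partition P [set: T], #|P| = 3 & {in P, forall B, stable e B}].

Definition tripartite (T : finType) (e : rel T) : Prop :=
  exists P, stable_tripartition e P.

Definition ptype (T : finType) (P : {set {set T}}) : seq nat :=
  sort geq [seq #|B| | B : {set T} <- enum (mem P)].

Definition balanced (T : finType) (P : {set {set T}}) : Prop :=
  {in P &, forall B1 B2 : {set T}, #|B1| <= #|B2| + 1}.

From HB Require Import structures.
From mathcomp Require Import all_boot all_order all_algebra.
From mathcomp Require Import mpoly.
From mathcomp Require Import zify.
Set Implicit Arguments. Unset Strict Implicit. Unset Printing Implicit Defensive.
Import Order.TTheory GRing.Theory Num.Theory.

(* Suppose a stable tripartition has blocks X, Y, Z with |Z| <= |Y| <= |X| and
   |X| >= |Z| + 2.  Colouring the blocks 0, 1, 2 puts x0^|X| x1^|Y| x2^|Z| into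
   X_G, so by Schur positivity this monomial is the content of a semistandard
   tableau of some shape la with positive coefficient.  Such a la has at most
   three rows and dominates (|X|, |Y|, |Z|), hence also (|X| - 1, |Y|, |Z| + 1);
   a tableau of shape la with the latter content exists, so its monomial lies
   in X_G and comes from a proper colouring whose classes form a stable
   tripartition of that type.  The two types have different sums of squares. *)

Section MonomialSums.
Local Open Scope ring_scope.
Variables (n : nat) (I : finType) (P : pred I) (m : 'X_{1..n}).

Lemma mcoeff_sum_mpolyX (R : nzRingType) (F : I -> 'X_{1..n}) :
  (\sum_(i | P i) 'X_[F i] : {mpoly R[n]})@_m = #|[set i | P i & F i == m]|%:R.
Proof.
rewrite raddf_sum /= -sum1_card natr_sum big_mkcond /= [RHS]big_mkcond /=.
by apply: eq_bigr => i _; rewrite mcoeffX inE; case: (P i); case: (F i == m).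
Qed.

Lemma mcoeff_psum_gt0 (R : numDomainType) (c : I -> R) (g : I -> {mpoly R[n]}) :
    (forall i, 0 <= c i) -> (forall i, 0 <= (g i)@_m) ->
  (0 < (\sum_(i | P i) c i *: g i)@_m) = [exists i, [&& P i, 0 < c i & 0 < (g i)@_m]].
Proof.
move=> c_ge0 g_ge0; have cg_ge0 i : 0 <= c i * (g i)@_m by rewrite mulr_ge0.
rewrite raddf_sum /=; under eq_bigr do rewrite mcoeffZ.
rewrite lt_def sumr_ge0 // andbT psumr_neq0 // -big_has big_orE.
apply: eq_existsb => i; rewrite /= andbA; case: (P i) => //=.
by rewrite !lt0r mulf_eq0 negb_or c_ge0 g_ge0 mulr_ge0 // !andbT.
Qed.

End MonomialSums.

Lemma card_set_gt0P (I : finType) (P : pred I) :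
  reflect (exists i, P i) (0 < #|[set i | P i]|).
Proof. by apply: (iffP card_gt0P) => -[i Pi]; exists i; rewrite inE in Pi *. Qed.

Definition tableau_mono n (la : {ffun 'I_n -> 'I_n.+1}) (t : {ffun 'I_n * 'I_n -> 'I_n}) :
  'X_{1..n} := (\sum_(c | in_shape la c) U_(t c))%MM.

Lemma tableau_monoE n (la : {ffun 'I_n -> 'I_n.+1}) t i :
  tableau_mono la t i = \sum_(c | in_shape la c) (t c == i).
Proof. by rewrite mnm_sumE; apply: eq_bigr => c _; rewrite mnm1E. Qed.

Lemma schur_mcoeff n (la : {ffun 'I_n -> 'I_n.+1}) m :
  ((schur la)@_m = #|[set t | is_ssyt la t & tableau_mono la t == m]|%:R)%R.
Proof.
rewrite /schur; under eq_bigr do rewrite -(big_morph _ (@mpolyXD _ _) (@mpolyX0 _ _)).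
exact: mcoeff_sum_mpolyX.
Qed.

Lemma schur_mcoeff_gt0P n (la : {ffun 'I_n -> 'I_n.+1}) m :
  reflect (exists t, is_ssyt la t && (tableau_mono la t == m)) (0 < (schur la)@_m)%R.
Proof. by rewrite schur_mcoeff ltr0n; apply: card_set_gt0P. Qed.

Section Colorings.
Variables (T : finType) (e : rel T).
Local Notation n := #|T|.

Definition color_mono (k : {ffun T -> 'I_n}) : 'X_{1..n} := (\sum_v U_(k v))%MM.

Definition color_class (k : {ffun T -> 'I_n}) i := [set v | k v == i].

Lemma color_monoE k i : color_mono k i = #|color_class k i|.
Proof.
rewrite mnm_sumE -sum1_card [RHS]big_mkcond /=.
by apply: eq_bigr => v _; rewrite mnm1E inE; case: (k v == i).
Qed.

Lemma chrom_sym_mcoeff_gt0P m :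
  reflect (exists k, proper_coloring e k && (color_mono k == m)) (0 < (chrom_sym e)@_m)%R.
Proof.
rewrite /chrom_sym; under eq_bigr do rewrite -(big_morph _ (@mpolyXD _ _) (@mpolyX0 _ _)).
by rewrite mcoeff_sum_mpolyX ltr0n; apply: card_set_gt0P.
Qed.

Lemma schur_positive_tableaux k0 : schur_positive e -> proper_coloring e k0 ->
  exists la, [/\ is_partition la,
    exists2 t, is_ssyt la t & tableau_mono la t = color_mono k0 &
    forall t, is_ssyt la t -> exists2 k, proper_coloring e k & color_mono k = tableau_mono la t].
Proof.
move=> [c [c_ge0 XGE]] k0_proper.
have XG_gt0 m : (0 < (chrom_sym e)@_m)%R =
    [exists la, [&& is_partition la, 0 < c la & 0 < (schur la)@_m]]%R.
  by rewrite XGE mcoeff_psum_gt0 // => la; rewrite schur_mcoeff ler0n.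
have /existsP[la /and3P[la_part c_gt0 /schur_mcoeff_gt0P[t /andP[t_ssyt /eqP tE]]]] :
    [exists la, [&& is_partition la, 0 < c la & 0 < (schur la)@_(color_mono k0)]]%R.
  by rewrite -XG_gt0; apply/chrom_sym_mcoeff_gt0P; exists k0; rewrite k0_proper eqxx.
exists la; split=> [//||t' t'_ssyt]; first by exists t.
have /chrom_sym_mcoeff_gt0P[k /andP[k_proper /eqP kE]] :
    (0 < (chrom_sym e)@_(tableau_mono la t'))%R.
  rewrite XG_gt0; apply/existsP; exists la; rewrite la_part c_gt0.
  by apply/schur_mcoeff_gt0P; exists t'; rewrite t'_ssyt eqxx.
by exists k.
Qed.

End Colorings.

Definition content3 n (m : 'X_{1..n}) (a b c : nat) :=
  forall i : 'I_n, m i = nth 0 [:: a; b; c] i.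

Definition step_entry (p q j : nat) : nat := (p <= j) + (q <= j).

Lemma sum_step_entry n p q L i : p <= q <= L -> L <= n ->
  \sum_(j < n | j < L) (step_entry p q j == i) = nth 0 [:: p; q - p; L - q] i.
Proof.
move=> /andP[le_pq le_qL] le_Ln; pose F j : nat := step_entry p q j == i.
rewrite -(big_ord_widen n F le_Ln) -(big_mkord xpredT F) {}/F.
rewrite (@big_cat_nat _ _ _ p) ?(leq_trans le_pq) //= (@big_cat_nat _ _ _ q p) //=.
rewrite (@eq_big_nat _ _ _ 0 p _ (fun=> nat_of_bool (i == 0))); last first.
  move=> j /andP[_ ltjp].
  by rewrite /step_entry leqNgt ltjp leqNgt (leq_trans ltjp le_pq) eq_sym.
rewrite (@eq_big_nat _ _ _ p q _ (fun=> nat_of_bool (i == 1))); last first.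
  by move=> j /andP[lepj ltjq]; rewrite /step_entry lepj leqNgt ltjq eq_sym.
rewrite (@eq_big_nat _ _ _ q L _ (fun=> nat_of_bool (i == 2))); last first.
  by move=> j /andP[leqj _]; rewrite /step_entry leqj (leq_trans le_pq leqj) eq_sym.
rewrite !sum_nat_const_nat subn0.
by case: i => [|[|[|i]]] /=; rewrite ?muln0 ?muln1 ?addn0 ?add0n ?nth_nil.
Qed.

Section Letters.
Variables (n : nat) (n_gt2 : 2 < n).

Let r0 : 'I_n := Ordinal (ltnW (ltnW n_gt2)).
Let r1 : 'I_n := Ordinal (ltnW n_gt2).
Let r2 : 'I_n := Ordinal n_gt2.

Lemma sum_three_letters (F : 'I_n -> nat) :
  (forall i : 'I_n, 2 < i -> F i = 0) -> \sum_i F i = F r0 + F r1 + F r2.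
Proof.
move=> F_gt2; rewrite (bigD1 r0) // (bigD1 r1) // (bigD1 r2) //= big1 ?addn0 ?addnA //.
by move=> i; rewrite -!val_eqE /= => ne012; apply: F_gt2; lia.
Qed.

Lemma content3E (m : 'X_{1..n}) a b c :
  content3 m a b c <->
  [/\ m r0 = a, m r1 = b, m r2 = c & forall i : 'I_n, 2 < i -> m i = 0].
Proof.
split=> [mE | [m0 m1 m2 m_gt2] i].
  by split=> [||| i]; rewrite mE //; case: i => [[|[|[|i]]] ?] //=; rewrite nth_nil.
have [-> | ne0] := eqVneq i r0; first by [].
have [-> | ne1] := eqVneq i r1; first by [].
have [-> | ne2] := eqVneq i r2; first by [].
have lt2i : 2 < i by move: ne0 ne1 ne2; rewrite -!val_eqE /=; lia.
by rewrite m_gt2 //; case: i lt2i {ne0 ne1 ne2} => [[|[|[|i]]] ?] //=; rewrite nth_nil.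
Qed.

End Letters.

Section Tableaux.
Variables (n : nat) (la : {ffun 'I_n -> 'I_n.+1}).
Hypothesis la_partition : is_partition la.

Lemma partition_nonincr (i j : 'I_n) : i <= j -> la j <= la i.
Proof. by case/andP: la_partition => /forallP/(_ i)/forallP/(_ j)/implyP. Qed.

Lemma partition_sum : \sum_i (la i : nat) = n.
Proof. by case/andP: la_partition => _ /eqP. Qed.

Lemma sum_shape (F : 'I_n * 'I_n -> nat) :
  \sum_(c | in_shape la c) F c = \sum_i \sum_(j < n | j < la i) F (i, j).
Proof. by rewrite pair_big_dep; apply: eq_big => [[i j]|[i j] _]. Qed.

Lemma sum_shape_row (g : 'I_n -> nat) :
  \sum_(c | in_shape la c) g c.1 = \sum_i la i * g i.
Proof.
rewrite sum_shape; apply: eq_bigr => i _.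
rewrite -(big_ord_widen n (fun=> g i) (ltn_ord (la i))) -(big_mkord xpredT (fun=> g i)).
by rewrite sum_nat_const_nat subn0.
Qed.

Lemma ssyt_row_le t c : is_ssyt la t -> in_shape la c -> c.1 <= t c.
Proof.
case/andP=> _ /forallP t_col; case: c => i j.
elim: {i}(i : nat) {-2}i (erefl (i : nat)) => [|r IHr] i /= iE ij_shape; first by rewrite iE.
have ltrn : r < n by have := ltn_ord i; lia.
have rj_shape : in_shape la (Ordinal ltrn, j).
  by apply: leq_trans ij_shape (partition_nonincr _); rewrite iE.
have := t_col (Ordinal ltrn) => /forallP/(_ i)/forallP/(_ j)/implyP.
rewrite rj_shape ij_shape iE ltnSn => /(_ isT).
exact: leq_ltn_trans (IHr (Ordinal ltrn) erefl rj_shape).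
Qed.

Lemma sum_tableau_mono t : \sum_i tableau_mono la t i = n.
Proof.
under eq_bigr do rewrite tableau_monoE; rewrite exchange_big /=.
transitivity (\sum_(y | in_shape la y) 1).
  apply: eq_bigr => y _; rewrite (bigD1 (t y)) //= eqxx big1 // => i.
  by rewrite eq_sym => /negbTE ->.
rewrite (sum_shape_row (fun=> 1)) -[RHS]partition_sum.
by apply: eq_bigr => i _; rewrite muln1.
Qed.

Section ThreeLetters.
Hypothesis n_gt2 : 2 < n.

Let r0 : 'I_n := Ordinal (ltnW (ltnW n_gt2)).
Let r1 : 'I_n := Ordinal (ltnW n_gt2).
Let r2 : 'I_n := Ordinal n_gt2.

Lemma ssyt_content3_dominated t a b c :
    is_ssyt la t -> content3 (tableau_mono la t) a b c ->
  [/\ forall r : 'I_n, 2 < r -> la r = 0 :> nat, a <= la r0 & a + b <= la r0 + la r1].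
Proof.
move=> t_ssyt /(content3E n_gt2)[t0 t1 _ t_gt2].
have t_le2 x : in_shape la x -> t x <= 2.
  move=> x_shape; rewrite leqNgt; apply/negP => /t_gt2.
  by rewrite tableau_monoE (bigD1 x) //= eqxx.
have la_gt2 (r : 'I_n) : 2 < r -> la r = 0 :> nat.
  move=> lt2r; apply/eqP; rewrite -leqn0 leqNgt; apply/negP => r_shape.
  have r0_shape : in_shape la (r, r0) by [].
  by have := t_le2 _ r0_shape; have := ssyt_row_le t_ssyt r0_shape; rewrite /=; lia.
have sum_rows (g : 'I_n -> nat) :
    \sum_(x | in_shape la x) g x.1 = la r0 * g r0 + la r1 * g r1 + la r2 * g r2.
  by rewrite sum_shape_row (sum_three_letters n_gt2) // => i /la_gt2 ->.
split=> //.
- rewrite -t0 tableau_monoE.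
  apply: leq_trans (_ : \sum_(x | in_shape la x) (x.1 <= 0) <= _).
    by apply: leq_sum => x x_shape; have := ssyt_row_le t_ssyt x_shape; rewrite -val_eqE /=; lia.
  by rewrite (sum_rows (fun i => i <= 0 : nat)) /=; lia.
- rewrite -t0 -t1 !tableau_monoE -big_split /=.
  apply: leq_trans (_ : \sum_(x | in_shape la x) (x.1 <= 1) <= _).
    by apply: leq_sum => x x_shape; have := ssyt_row_le t_ssyt x_shape; rewrite -!val_eqE /=; lia.
  by rewrite (sum_rows (fun i => i <= 1 : nat)) /=; lia.
Qed.

Section Filling.
Hypothesis la_gt2 : forall r : 'I_n, 2 < r -> la r = 0 :> nat.

(* Row 0 reads 0^a 1^x 2..2, row 1 reads 1^(b-x) 2..2, and the remaining row reads 2..2. *)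
Definition fill_entry a b x (y : 'I_n * 'I_n) : nat :=
  if y.1 == 0 :> nat then step_entry a (a + x) y.2
  else if y.1 == 1 :> nat then step_entry 0 (b - x) y.2
  else step_entry 0 0 y.2.

Definition filling a b x : {ffun 'I_n * 'I_n -> 'I_n} :=
  [ffun y => insubd r0 (if in_shape la y then fill_entry a b x y else 0)].

Lemma filling_val a b x y :
  filling a b x y = (if in_shape la y then fill_entry a b x y else 0) :> nat.
Proof.
rewrite ffunE val_insubd ifT //; case: in_shape; last exact: ltn_trans n_gt2.
by apply: leq_ltn_trans n_gt2; rewrite /fill_entry /step_entry; repeat case: ifP => _; lia.
Qed.

Lemma filling_ssyt a b x :
  b - x <= a -> la r1 <= a + x -> la r2 <= b - x -> is_ssyt la (filling a b x).
Proof.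
move=> le_a le_r1 le_r2; apply/andP; split; [apply/andP; split|].
- by apply/forallP => y; apply/implyP => /negbTE y_out; rewrite /= filling_val y_out.
- apply/forallP => i; apply/forallP => j; apply/forallP => j'.
  apply/implyP => /and3P[ij_shape ij'_shape lt_jj'].
  rewrite !filling_val ij_shape ij'_shape /fill_entry /step_entry /=.
  by repeat case: ifP => _; lia.
- apply/forallP => i; apply/forallP => i'; apply/forallP => j.
  apply/implyP => /and3P[ij_shape i'j_shape lt_ii'].
  have le_i'2 : i' <= 2.
    by rewrite leqNgt; apply/negP => /la_gt2 la0; rewrite /in_shape la0 in i'j_shape.
  rewrite !filling_val ij_shape i'j_shape /fill_entry /step_entry.
  have /orP[/eqP Ei' | /eqP Ei'] : (i' == r1) || (i' == r2) by rewrite -!val_eqE /=; lia.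
  all: have /orP[/eqP Ei | /eqP Ei] : (i == r0) || (i == r1) by rewrite -!val_eqE /=; lia.
  all: move: lt_ii' ij_shape i'j_shape; rewrite Ei Ei' /in_shape /=; lia.
Qed.

Lemma sum_three_rows : la r0 + la r1 + la r2 = n.
Proof. by rewrite -[RHS]partition_sum (sum_three_letters n_gt2). Qed.

Lemma filling_content3 a b c x :
    a + b + c = n -> a + x <= la r0 -> b - x <= la r1 -> x <= b ->
  content3 (tableau_mono la (filling a b x)) a b c.
Proof.
move=> sum_abc le_r0 le_r1 le_xb i.
have row_count (r : 'I_n) p q : p <= q <= la r ->
    (forall j, fill_entry a b x (r, j) = step_entry p q j) ->
    \sum_(j < n | j < la r) (filling a b x (r, j) == i) = nth 0 [:: p; q - p; la r - q] i.
  move=> le_pqr fillE; rewrite -(sum_step_entry i le_pqr (ltn_ord (la r))).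
  by apply: eq_bigr => j ltj; rewrite -val_eqE /= filling_val /in_shape ltj fillE.
rewrite tableau_monoE sum_shape (sum_three_letters n_gt2); last first.
  by move=> r /la_gt2 la0; rewrite big_pred0 // => j; rewrite la0.
rewrite (row_count r0 a (a + x)) // ?(row_count r1 0 (b - x)) // ?(row_count r2 0 0) //;
  try lia.
have := sum_three_rows; case: i {row_count} => [[|[|[|i]]] ?] /=; rewrite ?nth_nil; lia.
Qed.

Lemma ssyt_content3_exists a b c :
    a + b + c = n -> maxn a (maxn b c) <= la r0 ->
    maxn (a + b) (maxn (a + c) (b + c)) <= la r0 + la r1 ->
  exists2 t, is_ssyt la t & content3 (tableau_mono la t) a b c.
Proof.
move=> sum_abc le_r0 le_r01.
have la012 := sum_three_rows.
have le_r10 := partition_nonincr (isT : r0 <= r1).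
have le_r21 := partition_nonincr (isT : r1 <= r2).
(* x is squeezed between the bounds of filling_ssyt and filling_content3;
   dominance of the content by la makes these bounds compatible. *)
exists (filling a b (maxn (la r1 - a) (maxn (b - la r1) (b - a)))).
  by apply: filling_ssyt; lia.
by apply: filling_content3; lia.
Qed.

End Filling.

Lemma ssyt_content3_lower t A B C :
    is_ssyt la t -> content3 (tableau_mono la t) A B C -> C <= B <= A -> C + 2 <= A ->
  exists2 t', is_ssyt la t' & content3 (tableau_mono la t') A.-1 B C.+1.
Proof.
move=> t_ssyt tC le_CBA le_CA.
have [la_gt2 le_A le_AB] := ssyt_content3_dominated t_ssyt tC.
have := sum_tableau_mono t.
rewrite (sum_three_letters n_gt2); last by case/(content3E n_gt2): tC.
case/(content3E n_gt2): tC => -> -> -> _ sum_ABC.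
by apply: (ssyt_content3_exists la_gt2); lia.
Qed.

End ThreeLetters.

End Tableaux.

Lemma set3_sorted (A : finType) (f : A -> nat) (P : {set A}) : #|P| = 3 ->
  exists X Y Z, [/\ P = [set X; Y; Z], X != Y, X != Z, Y != Z & f Z <= f Y <= f X].
Proof.
move=> P3; pose s := sort [rel X Y | f Y <= f X] (enum P).
have s_perm : perm_eq s (enum P) by rewrite perm_sort.
have : sorted [rel X Y | f Y <= f X] s by apply: sort_sorted => X Y; apply: leq_total.
have : uniq s by rewrite (perm_uniq s_perm) enum_uniq.
have : size s = 3 by rewrite size_sort -cardE.
have s_mem W : (W \in s) = (W \in P) by rewrite (perm_mem s_perm) mem_enum.
case: s s_mem {s_perm} => [|X [|Y [|Z [|]]]] // s_mem _.
rewrite /= !inE !negb_or => /andP[/andP[nXY nXZ] /andP[nYZ _]] /andP[le_YX /andP[le_ZY _]].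
exists X, Y, Z; split; rewrite ?le_YX ?le_ZY //.
by apply/setP => W; rewrite -s_mem !inE orbA.
Qed.

Lemma sort_geqP (s1 s2 : seq nat) : reflect (sort geq s1 = sort geq s2) (perm_eq s1 s2).
Proof.
apply: perm_sortP.
- by move=> x y; rewrite /= orbC leq_total.
- by move=> y x z /= le_yx le_zy; apply: leq_trans le_yx.
- by move=> x y /= /andP[le_yx le_xy]; apply/eqP; rewrite eqn_leq le_xy le_yx.
Qed.

Section Tripartitions.
Variables (T : finType) (e : rel T).

Lemma ptype_set3 (X Y Z : {set T}) : X != Y -> X != Z -> Y != Z ->
  ptype [set X; Y; Z] = sort geq [:: #|X|; #|Y|; #|Z|].
Proof.
move=> nXY nXZ nYZ; apply/sort_geqP.
apply: (@perm_map _ _ (fun B : {set T} => #|B|) _ [:: X; Y; Z]).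
apply: uniq_perm; rewrite ?enum_uniq //=.
  by rewrite !inE !negb_or nXY nXZ nYZ.
by move=> W; rewrite mem_enum !inE orbA.
Qed.

Lemma card_set3 (X Y Z : {set T}) : X != Y -> X != Z -> Y != Z -> #|[set X; Y; Z]| = 3.
Proof. by move=> nXY nXZ nYZ; rewrite -setUA !cardsU1 cards1 !inE negb_or nXY nXZ nYZ. Qed.

Lemma proper_coloringP k :
  reflect (forall i, stable e (color_class k i)) (proper_coloring e k).
Proof.
apply: (iffP forallP) => [k_proper i | k_stable u].
  apply/forallP => u; apply/implyP; rewrite inE => /eqP ku.
  apply/forallP => v; apply/implyP; rewrite inE => /eqP kv.
  by apply/negP => /(implyP (forallP (k_proper u) v)); rewrite ku kv eqxx.
apply/forallP => v; apply/implyP => euv; apply/eqP => kuv.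
have /forallP/(_ u)/implyP := k_stable (k u); rewrite inE eqxx => /(_ isT).
by move=> /forallP/(_ v)/implyP; rewrite inE kuv eqxx euv => /(_ isT).
Qed.

Section ThreeColors.
Hypothesis T_gt2 : 2 < #|T|.

Let c0 : 'I_#|T| := Ordinal (ltnW (ltnW T_gt2)).
Let c1 : 'I_#|T| := Ordinal (ltnW T_gt2).
Let c2 : 'I_#|T| := Ordinal T_gt2.

Lemma tripartition_coloring X Y Z :
    stable_tripartition e [set X; Y; Z] -> X != Y -> X != Z -> Y != Z ->
  exists2 k, proper_coloring e k & content3 (color_mono k) #|X| #|Y| #|Z|.
Proof.
move=> [/and3P[/eqP P_cover P_triv _] _ P_stable] nXY nXZ nYZ.
have [XY_disj XZ_disj YZ_disj] : [/\ [disjoint X & Y], [disjoint X & Z] & [disjoint Y & Z]].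
  by split; apply: (trivIsetP P_triv); rewrite ?inE ?eqxx ?orbT.
have XYZ_cover v : [|| v \in X, v \in Y | v \in Z].
  have /bigcupP[W] : v \in cover [set X; Y; Z] by rewrite P_cover inE.
  by rewrite !inE -orbA => /or3P[]/eqP-> ->; rewrite ?orbT.
pose k := [ffun v => if v \in X then c0 else if v \in Y then c1 else c2].
have classX : color_class k c0 = X.
  by apply/setP => v; rewrite !inE ffunE; case: ifP => // _; case: ifP.
have classY : color_class k c1 = Y.
  apply/setP => v; rewrite !inE ffunE; case: ifP => [vX | _]; last by case: ifP.
  by rewrite (disjointFr XY_disj vX).
have classZ : color_class k c2 = Z.
  apply/setP => v; rewrite !inE ffunE; case: ifP => [vX | nvX].
    by rewrite (disjointFr XZ_disj vX).
  case: ifP => [vY | nvY]; first by rewrite (disjointFr YZ_disj vY).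
  by move: (XYZ_cover v); rewrite nvX nvY eqxx.
have class0 (i : 'I_#|T|) : 2 < i -> color_class k i = set0.
  move=> lt2i; apply/setP => v; rewrite !inE ffunE.
  by apply/negbTE/eqP => vi; move: lt2i; rewrite -vi; repeat case: ifP.
exists k.
  apply/proper_coloringP => i.
  have [-> | ne0] := eqVneq i c0; first by rewrite classX P_stable // !inE eqxx.
  have [-> | ne1] := eqVneq i c1; first by rewrite classY P_stable // !inE eqxx orbT.
  have [-> | ne2] := eqVneq i c2; first by rewrite classZ P_stable // !inE eqxx !orbT.
  rewrite class0; first by apply/forallP => u; rewrite inE.
  by move: ne0 ne1 ne2; rewrite -!val_eqE /=; lia.
apply/(content3E T_gt2); split=> [|||i lt2i]; rewrite color_monoE ?classX ?classY ?classZ //.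
by rewrite class0 ?cards0.
Qed.

Lemma color_class_disjoint (k : {ffun T -> 'I_#|T|}) i j :
  i != j -> [disjoint color_class k i & color_class k j].
Proof.
move=> nij; rewrite -setI_eq0; apply/eqP/setP => v; rewrite !inE.
by apply/negbTE; apply: contra nij => /andP[/eqP <- /eqP ->].
Qed.

Lemma coloring_tripartition (k : {ffun T -> 'I_#|T|}) a b c :
    proper_coloring e k -> content3 (color_mono k) a b c -> 0 < a -> 0 < b -> 0 < c ->
  exists2 Q, stable_tripartition e Q & ptype Q = sort geq [:: a; b; c].
Proof.
move=> k_proper /(content3E T_gt2)[]; rewrite !color_monoE => ka kb kc k_gt2.
move=> a_gt0 b_gt0 c_gt0.
have class_neq i j : i != j -> 0 < #|color_class k i| -> color_class k i != color_class k j.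
  move=> nij /card_gt0P[v vi]; apply/eqP => Eij.
  by move: (color_class_disjoint k nij) => /disjointFr/(_ vi); rewrite -Eij vi.
have [n01 n02 n12] : [/\ color_class k c0 != color_class k c1,
    color_class k c0 != color_class k c2 & color_class k c1 != color_class k c2].
  by split; apply: class_neq; rewrite ?ka ?kb.
have k_cover v : [|| k v == c0, k v == c1 | k v == c2].
  case: (ltnP 2 (k v)) => [lt2kv | ]; last by case: (k v) => [[|[|[|j]]] ?].
  have : 0 < #|color_class k (k v)| by apply/card_gt0P; exists v; rewrite inE.
  by rewrite -color_monoE k_gt2.
exists [set color_class k c0; color_class k c1; color_class k c2];
  last by rewrite ptype_set3 // ka kb kc.
split; last 2 first.
- exact: card_set3.
- by move=> U; rewrite !inE -!orbA => /or3P[]/eqP->; apply/proper_coloringP.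
apply/and3P; split.
- apply/eqP/setP => v; rewrite inE; apply/bigcupP.
  case/or3P: (k_cover v) => kv;
    [exists (color_class k c0) | exists (color_class k c1) | exists (color_class k c2)];
  by rewrite !inE ?eqxx ?orbT.
- apply/trivIsetP => U V; rewrite !inE -!orbA.
  by move=> /or3P[]/eqP-> /or3P[]/eqP->; rewrite ?eqxx // => _; apply: color_class_disjoint.
- rewrite !inE -!orbA; apply/negP => /or3P[]/eqP E.
  + by move: a_gt0; rewrite -ka -E cards0.
  + by move: b_gt0; rewrite -kb -E cards0.
  + by move: c_gt0; rewrite -kc -E cards0.
Qed.

End ThreeColors.

End Tripartitions.

Theorem lemma3p5 (T : finType) (e : rel T) :
  simple_graph e ->
  schur_positive e ->
  tripartite e ->
  (forall P Q, stable_tripartition e P -> stable_tripartition e Q ->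
     ptype P = ptype Q) ->
  forall P, stable_tripartition e P -> balanced P.
Proof.
move=> _ e_schur _ same_type P P_trip B1 B2 B1P B2P; rewrite leqNgt; apply/negP => unbalanced.
have [/and3P[_ _ P_nonempty] P3 _] := P_trip.
have [X [Y [Z [PE nXY nXZ nYZ le_ZYX]]]] := set3_sorted (fun B : {set T} => #|B|) P3.
have le_ZX2 : #|Z| + 2 <= #|X|.
  move: B1P B2P unbalanced le_ZYX; rewrite PE !inE -!orbA.
  by move=> /or3P[]/eqP-> /or3P[]/eqP->; lia.
have Z_gt0 : 0 < #|Z|.
  by rewrite card_gt0; apply: contraNneq P_nonempty => <-; rewrite PE !inE eqxx !orbT.
have T_gt2 : 2 < #|T| by apply: leq_trans (max_card X); lia.
rewrite PE in P_trip.
have [k0 k0_proper k0_content] := tripartition_coloring T_gt2 P_trip nXY nXZ nYZ.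
have [la [la_part [t t_ssyt tE] colorable]] := schur_positive_tableaux e_schur k0_proper.
rewrite -tE in k0_content.
have [t' t'_ssyt t'_content] :=
  ssyt_content3_lower la_part T_gt2 t_ssyt k0_content le_ZYX le_ZX2.
have [k1 k1_proper k1E] := colorable t' t'_ssyt; rewrite -k1E in t'_content.
have [|||Q Q_trip Q_type] := coloring_tripartition T_gt2 k1_proper t'_content;
  [by clear -le_ZX2; lia | by clear -Z_gt0 le_ZYX; lia | by [] |].
have := same_type _ _ P_trip Q_trip; rewrite ptype_set3 // Q_type.
move=> /sort_geqP/(perm_map (fun x => x ^ 2))/perm_sumn /=.
by move: le_ZX2; clear; case: #|X| => [|A] //= le_ZA; nia.
Qed.
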